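(* Let $p\in(0,1]$. In the random node-based stable matching model described in the context, the probability $D^{(N)}(i,j)=\mathbb P(i\text{ and }j\text{ are matched to each other in the stable matching})$ does not depend on $N$ as long as $N\ge\max(i,j)$; write it $D(i,j)$. It satisfies $D(i,i)=0$, $D(i,j)=D(j,i)$, $D(1,k)=p(1-p)^{k-2}$ for $k\ge2$, and for all integers $2\le i<j$, $$D(i,j)=\bigl(1-(1-p)^{i-2}\bigr)D(i-2,j-2)+\bigl((1-p)^{i-1}-(1-p)^{j-2}\bigr)D(i-1,j-2)+(1-p)^{j-1}D(i-1,j-1),$$ with the convention that the first term is $0$ when $i=2$.
   Context: Model: $N\ge2$ nodes labeled $1,\dots,N$; the acceptance graph $G$ is an Erdős–Rényi random graph $\mathcal G(N,p)$ (each of the $\binom N2$ possible edges present independently with probability $p$). Preferences are node-based: every node prefers a neighbor with smaller label to one with larger label. A matching $M\subseteq E(G)$ is stable if there is no edge $\{u,v\}\in E(G)\setminus M$ such that each of $u,v$ is either unmatched in $M$ or matched in $M$ to a node with larger label than the other endpoint. For such preferences there is a unique stable matching. *)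

From HB Require Import structures.
From mathcomp Require Import all_boot all_order all_algebra.
Set Implicit Arguments. Unset Strict Implicit. Unset Printing Implicit Defensive.
Import Order.TTheory GRing.Theory Num.Theory.
Local Open Scope ring_scope.

(* Nodes are u : 'I_N, and node u has label u.+1 (labels 1..N).
   Comparing labels is the same as comparing the ordinals. *)

Definition pairs (N : nat) : {set {set 'I_N}} := [set e : {set 'I_N} | #|e| == 2%N].

Definition is_matching N (G M : {set {set 'I_N}}) : bool :=
  (M \subset G) &&
  [forall u : 'I_N, #|[set e in M | u \in e]| <= 1]%N.

(* "u prefers v to its current situation": u is unmatched in M, or u is matched
   in M to a node x with larger label than v. *)
Definition prefers N (M : {set {set 'I_N}}) (u v : 'I_N) : bool :=
  [forall f in M, (u \in f) ==> [forall x in f, (x != u) ==> (v < x)%N]].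

Definition blocking N (M : {set {set 'I_N}}) (e : {set 'I_N}) : bool :=
  [forall u in e, forall v in e, (u != v) ==> prefers M u v].

Definition is_stable N (G M : {set {set 'I_N}}) : bool :=
  is_matching G M && [forall e in G :\: M, ~~ blocking M e].

(* The nodes with labels i and j are matched to each other in the stable
   matching of G (the stable matching being unique, "there is a stable
   matching containing the edge" is the event of the paper). *)
Definition matched_ij N (G : {set {set 'I_N}}) (i j : nat) : bool :=
  [exists u : 'I_N, exists v : 'I_N,
     [&& u.+1 == i, v.+1 == j &
         [exists M : {set {set 'I_N}}, is_stable G M && ([set u; v] \in M)]]].

Definition er_weight (R : numDomainType) (N : nat) (p : R) (G : {set {set 'I_N}}) : R :=
  p ^+ #|G| * (1 - p) ^+ (#|pairs N| - #|G|).

Definition DN (R : numDomainType) (N : nat) (p : R) (i j : nat) : R :=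
  \sum_(G in powerset (pairs N) | matched_ij G i j) er_weight p G.

(* Stable matching with node-based preferences is computed greedily: the lowest
   node a of the vertex set is matched to its lowest neighbour v, and the rest of
   the matching is the stable matching of the graph with a and v removed. The
   edges at a are independent of the others, so conditioning on v reduces the
   problem to a smaller vertex set, in which only the ranks of the two nodes x < y
   of interest matter. If x has rank i and y rank j, then v lies below x with
   probability 1 - (1-p)^(i-2) (both ranks drop by 2), strictly between x and y
   with probability (1-p)^(i-1) - (1-p)^(j-2) (ranks drop by 1 and 2), and a has
   no neighbour up to y with probability (1-p)^(j-1) (both ranks drop by 1);
   when v is x or y, x and y are not matched together. When x is a itself, it is
   matched to y exactly when y is its lowest neighbour. Induction on the vertex
   set shows that the matching probability depends only on the ranks, through
   the recursion. *)

From HB Require Import structures.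
From mathcomp Require Import all_boot all_order all_algebra.
From mathcomp Require Import zify ring.
Import Order.TTheory GRing.Theory Num.Theory.
Set Implicit Arguments. Unset Strict Implicit. Unset Printing Implicit Defensive.

Section RandomSubset.
Local Open Scope ring_scope.
Variables (R : comPzRingType) (p : R) (T : finType).
Implicit Types (S A : {set T}) (F : {set T} -> R).

Definition subset_weight S A : R := p ^+ #|A| * (1 - p) ^+ (#|S| - #|A|).

Definition Ex S F : R := \sum_(A in powerset S) subset_weight S A * F A.

Lemma eq_Ex S F F' : (forall A, A \subset S -> F A = F' A) -> Ex S F = Ex S F'.
Proof. by move=> eqF; apply: eq_bigr => A; rewrite powersetE => /eqF ->. Qed.

Lemma ExD S F F' : Ex S (fun A => F A + F' A) = Ex S F + Ex S F'.
Proof. by rewrite /Ex -big_split; apply: eq_bigr => A _; rewrite mulrDr. Qed.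

Lemma ExB S F F' : Ex S (fun A => F A - F' A) = Ex S F - Ex S F'.
Proof. by rewrite /Ex -sumrB; apply: eq_bigr => A _; rewrite mulrBr. Qed.

Lemma ExZ S c F : Ex S (fun A => c * F A) = c * Ex S F.
Proof. by rewrite /Ex mulr_sumr; apply: eq_bigr => A _; rewrite mulrCA. Qed.

Lemma setUIl_disjoint S1 S2 A1 A2 : [disjoint S1 & S2] ->
  A1 \subset S1 -> A2 \subset S2 -> (A1 :|: A2) :&: S1 = A1.
Proof.
move=> S12 sA1 sA2; rewrite setIUl (setIidPl sA1).
suff -> : A2 :&: S1 = set0 by rewrite setU0.
by apply/disjoint_setI0; rewrite disjoint_sym; apply: disjointWr sA2 S12.
Qed.

Lemma cardsU_disjoint A1 A2 : [disjoint A1 & A2] -> #|A1 :|: A2| = (#|A1| + #|A2|)%N.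
Proof. by move=> A12; rewrite cardsU (disjoint_setI0 A12) cards0 subn0. Qed.

Lemma Ex_setU S1 S2 F : [disjoint S1 & S2] ->
  Ex (S1 :|: S2) F = Ex S1 (fun A1 => Ex S2 (fun A2 => F (A1 :|: A2))).
Proof.
move=> S12; have S21 : [disjoint S2 & S1] by rewrite disjoint_sym.
rewrite /Ex; under [RHS]eq_bigr => A1 _ do rewrite big_distrr /=.
rewrite pair_big /=.
have -> : powerset (S1 :|: S2) =
    (fun A12 : {set T} * {set T} => A12.1 :|: A12.2) @: setX (powerset S1) (powerset S2).
  apply/setP => A; rewrite powersetE; apply/idP/imsetP => [sA|].
    exists (A :&: S1, A :&: S2); first by rewrite in_setX !powersetE !subsetIr.
    by rewrite /= -setIUr; apply/esym/setIidPl.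
  by case=> -[A1 A2]; rewrite in_setX !powersetE /= => /andP[? ?] ->; apply: setUSS.
rewrite big_imset /=; last first.
  move=> [A1 A2] [B1 B2]; rewrite !in_setX !powersetE /=.
  move=> /andP[sA1 sA2] /andP[sB1 sB2] eqU.
  congr pair.
    by rewrite -(setUIl_disjoint S12 sA1 sA2) eqU (setUIl_disjoint S12 sB1 sB2).
  by rewrite -(setUIl_disjoint S21 sA2 sA1) setUC eqU setUC (setUIl_disjoint S21 sB2 sB1).
apply: eq_big => [[A1 A2]|[A1 A2]]; first by rewrite in_setX.
rewrite in_setX !powersetE /= => /andP[sA1 sA2]; rewrite mulrA; congr (_ * _).
have A12 : [disjoint A1 & A2] by apply: disjointWl sA1 (disjointWr sA2 S12).
have := subset_leq_card sA1; have := subset_leq_card sA2.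
rewrite /subset_weight !cardsU_disjoint // exprD => le2 le1.
have -> : (#|S1| + #|S2| - (#|A1| + #|A2|) = (#|S1| - #|A1|) + (#|S2| - #|A2|))%N by lia.
by rewrite exprD; ring.
Qed.

Lemma Ex_cst S c : Ex S (fun => c) = c.
Proof.
elim: {S}#|S| {-2}S (erefl #|S|) => [|n IH] S cardS.
  move/eqP: cardS; rewrite cards_eq0 => /eqP ->.
  by rewrite /Ex powerset0 big_set1 /subset_weight cards0 !expr0 !mul1r.
have [x xS] : exists x, x \in S by apply/set0Pn; rewrite -card_gt0 cardS.
have cardSx : #|S :\ x| = n by move: cardS; rewrite (cardsD1 x) xS => -[].
rewrite -(setD1K xS) Ex_setU ?disjoints1 ?setD11 //.
under eq_Ex => A _ do rewrite IH //.
rewrite /Ex powerset1 big_setU1 ?big_set1 /=; last first.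
  by rewrite !inE eq_sym -cards_eq0 cards1.
rewrite /subset_weight cards0 cards1 subn0 subnn !expr0 !expr1; ring.
Qed.

Lemma Ex_indep S1 S2 F : [disjoint S1 & S2] ->
  (forall A1 A2, A1 \subset S1 -> A2 \subset S2 -> F (A1 :|: A2) = F A1) ->
  Ex (S1 :|: S2) F = Ex S1 F.
Proof.
move=> S12 FA1; rewrite Ex_setU //; apply: eq_Ex => A1 sA1.
by rewrite -[RHS](Ex_cst S2); apply: eq_Ex => A2; apply: FA1.
Qed.

Lemma Ex_avoid S (O : {set T}) :
  O \subset S -> Ex S (fun A => (A :&: O == set0)%:R) = (1 - p) ^+ #|O|.
Proof.
move=> sOS; have OSO : [disjoint O & S :\: O].
  by rewrite disjoint_sym; have /subsetDP[] : S :\: O \subset S :\: O by [].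
rewrite -(setID S O) (setIidPr sOS) Ex_indep //; last first.
  move=> A1 A2 _ sA2; rewrite setIUl; congr ((_ == _)%:R).
  suff -> : A2 :&: O = set0 by rewrite setU0.
  by apply/disjoint_setI0; apply: disjointWl sA2 _; rewrite disjoint_sym.
rewrite /Ex (bigD1 set0) ?powersetE ?sub0set //= set0I eqxx mulr1.
rewrite big1 ?addr0 => [|A /andP[]]; last first.
  by rewrite powersetE => /setIidPl -> /negbTE ->; rewrite mulr0.
by rewrite /subset_weight cards0 expr0 mul1r subn0.
Qed.

End RandomSubset.

Section StableMatching.
Variable N : nat.
Implicit Types (G M : {set {set 'I_N}}) (e f : {set 'I_N}) (a u v w x y z : 'I_N).

Lemma prefersP M u w :
  reflect (forall f x, f \in M -> u \in f -> x \in f -> x != u -> w < x)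
          (prefers M u w).
Proof.
apply: (iffP forallP) => [pref f x fM uf xf xu|pref f].
  by have /implyP/(_ fM)/implyP/(_ uf)/forallP/(_ x) := pref f; rewrite xf xu.
apply/implyP => fM; apply/implyP => uf; apply/forallP => x.
apply/implyP => xf; apply/implyP => xu; exact: pref f x fM uf xf xu.
Qed.

Lemma blockingP M e :
  reflect (forall u w, u \in e -> w \in e -> u != w -> prefers M u w)
          (blocking M e).
Proof.
apply: (iffP forallP) => [blk u w ue we uw|blk u].
  by have /implyP/(_ ue)/forallP/(_ w) := blk u; rewrite we uw.
apply/implyP => ue; apply/forallP => w; apply/implyP => we; apply/implyP.
exact: blk u w ue we.
Qed.

Lemma blockingW M1 M2 e :
  (forall u f, u \in e -> f \in M2 -> u \in f -> f \in M1) ->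
  blocking M1 e -> blocking M2 e.
Proof.
move=> sub21 /blockingP blk; apply/blockingP => u w ue we uw.
apply/prefersP => f x fM uf; apply: (prefersP _ _ _ (blk u w ue we uw)) => //.
exact: sub21 fM uf.
Qed.

Lemma card_pairs e : e \in pairs N -> #|e| = 2.
Proof. by rewrite inE => /eqP. Qed.

Lemma card2_set2 e u x : #|e| = 2 -> u \in e -> x \in e -> u != x -> e = [set u; x].
Proof.
move=> e2 ue xe ux; apply/eqP; rewrite eq_sym eqEcard cards2 ux e2 leqnn andbT.
by apply/subsetP => z; rewrite !inE => /orP[] /eqP ->.
Qed.

Lemma card2_mem e u : #|e| = 2 -> u \in e -> exists2 x, x != u & e = [set u; x].
Proof.
move=> /eqP/cards2P[x1 [x2 [x12 ->]]]; rewrite !inE => /orP[]/eqP ->.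
  by exists x2; rewrite 1?eq_sym.
by exists x1; rewrite 1?setUC.
Qed.

Lemma card_set2_neq u x : #|[set u; x]| = 2 -> u != x.
Proof. by rewrite cards2; case: (u != x). Qed.

Lemma matching_mem_uniq G M e1 e2 u : is_matching G M -> e1 \in M -> e2 \in M ->
  u \in e1 -> u \in e2 -> e1 = e2.
Proof.
move=> /andP[_ /forallP /(_ u) /card_le1_eqP uniq_u] e1M e2M ue1 ue2.
by apply: uniq_u; rewrite inE ?e1M ?e2M.
Qed.

Definition matched G x y := [exists M, is_stable G M && ([set x; y] \in M)].

Lemma matchedC G x y : matched G x y = matched G y x.
Proof. by rewrite /matched setUC. Qed.

Lemma matched_diag G x : G \subset pairs N -> matched G x x = false.
Proof.
move=> sGP; apply/negbTE/existsP => -[M /andP[/andP[/andP[sMG _] _] xxM]].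
by have /card_pairs/card_set2_neq := subsetP sGP _ (subsetP sMG _ xxM); rewrite eqxx.
Qed.

Lemma matched_isolated G a y : (forall e, e \in G -> a \notin e) -> matched G a y = false.
Proof.
move=> isol; apply/negbTE/existsP => -[M /andP[/andP[/andP[sMG _] _] ayM]].
by have := isol _ (subsetP sMG _ ayM); rewrite set21.
Qed.

Section Peel.
Variables (G : {set {set 'I_N}}) (a v : 'I_N).
Hypotheses (sGP : G \subset pairs N)
  (a_min : forall e z, e \in G -> z \in e -> a <= z)
  (avG : [set a; v] \in G)
  (v_min : forall z, [set a; z] \in G -> v <= z).

Definition peel := [set e in G | (a \notin e) && (v \notin e)].

Lemma peel_sub : peel \subset G.
Proof. by apply/subsetP => e; rewrite inE => /andP[]. Qed.

Lemma card_edge e : e \in G -> #|e| = 2.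
Proof. by move=> /(subsetP sGP)/card_pairs. Qed.

Lemma min_pair_neq : a != v.
Proof. exact: card_set2_neq (card_edge avG). Qed.

Lemma stable_min_pair M : is_stable G M -> [set a; v] \in M.
Proof.
(* Otherwise {a, v} blocks M: a prefers its lowest neighbour v to anything, and
   v prefers the lowest node a. *)
case/andP=> /andP[sMG _] /forallP nonblocking; apply/negPn/negP => avM.
have /implyP := nonblocking [set a; v]; rewrite !inE avM avG => /(_ isT) /negP; apply.
apply/blockingP => u w; rewrite !inE => /orP[]/eqP-> /orP[]/eqP->; rewrite ?eqxx // => _.
- apply/prefersP => f x fM af xf xa.
  have fG := subsetP sMG f fM.
  have ef : f = [set a; x] by apply: card2_set2 (card_edge fG) af xf _; rewrite eq_sym.
  have vx : v <= x by apply: v_min; rewrite -ef.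
  rewrite ltn_neqAle vx andbT; apply: contraNneq avM => /val_inj ev.
  by rewrite ev -ef.
- apply/prefersP => f x fM vf xf xv.
  have fG := subsetP sMG f fM.
  have ef : f = [set v; x] by apply: card2_set2 (card_edge fG) vf xf _; rewrite eq_sym.
  rewrite ltn_neqAle (a_min fG xf) andbT; apply: contraNneq avM => /val_inj ax.
  by rewrite ax setUC -ef.
Qed.

Lemma stable_peel M : is_stable G M -> is_stable peel (M :\ [set a; v]).
Proof.
move=> stM; have avM := stable_min_pair stM.
case/andP: stM => /andP[sMG mM] /forallP nonblocking.
have matM : is_matching G M by rewrite /is_matching sMG mM.
apply/andP; split; first (apply/andP; split).
- apply/subsetP => e; rewrite !inE => /andP[eav eM].
  rewrite (subsetP sMG e eM) /=; apply/andP; split; apply: contra eav => ue;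
    by rewrite (matching_mem_uniq matM eM avM ue) ?eqxx ?set21 ?set22.
- apply/forallP => u; apply: leq_trans (forallP mM u).
  by apply: subset_leq_card; apply/subsetP => e; rewrite !inE => /andP[/andP[_ ->] ->].
apply/forallP => e; apply/implyP; rewrite !inE negb_and negbK.
case/andP => eM' /andP[eG /andP[ae ve]].
have eM : e \notin M.
  by apply: contra ae => eM; move: eM'; rewrite eM orbF => /eqP->; rewrite set21.
have /implyP := nonblocking e; rewrite !inE eM eG => /(_ isT); apply: contra.
apply: blockingW => u f ue fM uf; rewrite !inE fM andbT.
apply: contraNneq ae => fav; move: uf; rewrite fav !inE => /orP[]/eqP uav.
  by rewrite -uav.
by move: ve; rewrite -uav ue.
Qed.

Lemma stable_unpeel M : is_stable peel M -> is_stable G ([set a; v] |: M).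
Proof.
case/andP=> /andP[sMG mM] /forallP nonblocking.
have peelM e : e \in M -> [&& e \in G, a \notin e & v \notin e].
  by move/(subsetP sMG); rewrite inE.
apply/andP; split; first (apply/andP; split).
- by apply/subsetP => e; rewrite !inE => /orP[/eqP->//|/peelM/andP[]].
- apply/forallP => u; case uav: (u \in [set a; v]).
    rewrite -(cards1 [set a; v]); apply: subset_leq_card; apply/subsetP => e; rewrite !inE.
    case/andP => /orP[->//|/peelM /and3P[_ ae ve]] ue.
    by move: uav; rewrite !inE => /orP[]/eqP uv; [move: ae|move: ve]; rewrite -uv ue.
  apply: leq_trans (forallP mM u); apply: subset_leq_card; apply/subsetP => e.
  rewrite !inE => /andP[/orP[/eqP eav|->] ue] //.
  by move: uav; rewrite -eav ue.
have avM : [set a; v] \in [set a; v] |: M by rewrite setU11.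
apply/forallP => e; apply/implyP; rewrite !inE negb_or => /andP[/andP[eav eM] eG].
case ae: (a \in e).
  have [x xa ex] := card2_mem (card_edge eG) ae.
  apply/negP => /blockingP /(_ a x ae); rewrite ex set22 eq_sym xa => /(_ isT isT).
  move=> /prefersP /(_ _ v avM (set21 _ _) (set22 _ _)); rewrite eq_sym min_pair_neq.
  by have := @v_min x; rewrite -ex => /(_ eG); lia.
case ve: (v \in e).
  have [x xv ex] := card2_mem (card_edge eG) ve.
  apply/negP => /blockingP /(_ v x ve); rewrite ex set22 eq_sym xv => /(_ isT isT).
  move=> /prefersP /(_ _ a avM (set22 _ _) (set21 _ _)); rewrite min_pair_neq.
  by have := a_min eG (_ : x \in e); rewrite ex set22 => /(_ isT); lia.
have /implyP := nonblocking e; rewrite !inE eM eG ae ve => /(_ isT); apply: contra.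
by apply: blockingW => u f ue fM uf; rewrite inE fM orbT.
Qed.

Lemma matched_peel x y : x \notin [set a; v] -> y \notin [set a; v] ->
  matched G x y = matched peel x y.
Proof.
move=> xav yav; apply/existsP/existsP => -[M /andP[stM xyM]].
  exists (M :\ [set a; v]); rewrite stable_peel //= !inE xyM andbT.
  by apply: contraNneq xav => <-; rewrite set21.
by exists ([set a; v] |: M); rewrite stable_unpeel //= setU1r.
Qed.

Lemma matched_partner y : y != a -> matched G v y = false.
Proof.
move=> ya; apply/negbTE/existsP => -[M /andP[stM vyM]].
have avM := stable_min_pair stM; have /andP[matM _] := stM.
have := matching_mem_uniq matM vyM avM (set21 _ _) (set22 _ _).
move=> /setP/(_ y); rewrite set22 !inE (negbTE ya) /= => /esym/eqP yv.
by have := card_edge (subsetP (proj1 (andP matM)) _ vyM); rewrite yv setUid cards1.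
Qed.

Lemma matched_min y : (exists M, is_stable peel M) -> matched G a y = (y == v).
Proof.
move=> [M' stM']; apply/existsP/eqP => [[M /andP[stM ayM]]|->]; last first.
  by exists ([set a; v] |: M'); rewrite stable_unpeel // setU11.
have avM := stable_min_pair stM; have /andP[matM _] := stM.
have /setP/(_ y) := matching_mem_uniq matM ayM avM (set21 _ _) (set21 _ _).
rewrite set22 !inE => /esym/orP[/eqP ya|/eqP//].
by have := card_edge (subsetP (proj1 (andP matM)) _ ayM); rewrite ya setUid cards1.
Qed.

End Peel.

Lemma stable_set0 : is_stable (set0 : {set {set 'I_N}}) set0.
Proof.
rewrite /is_stable /is_matching sub0set; apply/andP; split.
  apply/forallP => u; rewrite (@leq_trans 0) // leqn0 cards_eq0.
  by apply/eqP/setP => e; rewrite !inE.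
by apply/forallP => e; rewrite !inE.
Qed.

(* Match the lowest non-isolated node to its lowest neighbour and recurse on [peel]. *)
Lemma stable_exists G : G \subset pairs N -> exists M, is_stable G M.
Proof.
elim: {G}#|G| {-2}G (leqnn #|G|) => [|n IH] G cardG sGP.
  by move: cardG; rewrite leqn0 cards_eq0 => /eqP->; exists set0; apply: stable_set0.
have [->|[e0 e0G]] := set_0Vmem G; first by exists set0; apply: stable_set0.
have [z0 z0e] : exists z0, z0 \in e0.
  by apply/set0Pn; rewrite -card_gt0 (card_pairs (subsetP sGP _ e0G)).
pose used z := [exists e in G, z \in e].
have used_z0 : used z0 by apply/existsP; exists e0; rewrite e0G.
have [a /existsP[e1 /andP[e1G ae1]] a_min] := arg_minnP val used_z0.
have [x0 _ ex0] := card2_mem (card_pairs (subsetP sGP _ e1G)) ae1.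
have ax0G : [set a; x0] \in G by rewrite -ex0.
have [v avG v_min] := @arg_minnP _ x0 (fun z => [set a; z] \in G) val ax0G.
have min_a e z : e \in G -> z \in e -> a <= z.
  by move=> eG ze; apply: a_min; apply/existsP; exists e; rewrite eG.
have [M stM] : exists M, is_stable (peel G a v) M.
  apply: IH (subset_trans (peel_sub G a v) sGP); rewrite -ltnS; apply: leq_trans cardG.
  apply: proper_card; rewrite properE peel_sub; apply/subsetPn.
  by exists [set a; v]; rewrite // inE set21 andbF.
by exists ([set a; v] |: M); apply: stable_unpeel.
Qed.

End StableMatching.

Local Open Scope ring_scope.

Section Recursion.
Variables (R : comPzRingType) (p : R).

Fixpoint Dtri (i j : nat) : R :=
  match i with
  | 0 => 0
  | 1 => if (1 < j)%N then p * (1 - p) ^+ (j - 2) else 0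
  | (k.+1 as i1).+1 =>
      if (i1.+1 < j)%N then
        (1 - (1 - p) ^+ k) * Dtri k (j - 2)
        + ((1 - p) ^+ i1 - (1 - p) ^+ (j - 2)) * Dtri i1 (j - 2)
        + (1 - p) ^+ (j - 1) * Dtri i1 (j - 1)
      else 0
  end.

Definition Dsym i j := if (i < j)%N then Dtri i j else Dtri j i.

Lemma Dtri_ge i j : (j <= i)%N -> Dtri i j = 0.
Proof. by case: i => [|[|k]] //= ji; rewrite ltnNge ji. Qed.

Lemma DtriSS k j : Dtri k.+2 j =
  if (k.+2 < j)%N then
        (1 - (1 - p) ^+ k) * Dtri k (j - 2)
        + ((1 - p) ^+ k.+1 - (1 - p) ^+ (j - 2)) * Dtri k.+1 (j - 2)
        + (1 - p) ^+ (j - 1) * Dtri k.+1 (j - 1)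
  else 0.
Proof. by []. Qed.

Lemma Dsym_le i j : (i <= j)%N -> Dsym i j = Dtri i j.
Proof. by rewrite /Dsym leq_eqVlt => /orP[/eqP->|->]; rewrite ?ltnn. Qed.

Lemma DsymC i j : Dsym i j = Dsym j i.
Proof. by rewrite /Dsym; case: ltngtP => // ->. Qed.

Lemma Dsym_diag i : Dsym i i = 0.
Proof. by rewrite Dsym_le ?Dtri_ge. Qed.

(* The value of the recursion once the lowest node is matched to v: v and the
   lowest node are removed, so ranks above v drop by one more. *)
Lemma Dsym_partner (i j x y v : nat) : (1 < i < j)%N -> (x < y)%N ->
  ((v != x) && (v != y))%:R * Dsym (i - 1 - (v <= x)) (j - 1 - (v <= y)) =
  Dtri (i - 2) (j - 2) * (1 - (x <= v)%:R)
  + Dtri (i - 1) (j - 2) * ((x < v)%:R - (y <= v)%:R)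
  + Dtri (i - 1) (j - 1) * (y < v)%:R.
Proof.
move=> /andP[i1 ij] xy; case: (ltngtP v x) => [vx|xv|vx].
- have vy := ltn_trans vx xy.
  rewrite (ltn_eqF vy) (ltnW vy) (ltn_geF vy) (leq_gtF (ltnW vy)).
  by rewrite Dsym_le /= -?subnDA; [ring | lia].
- case: (ltngtP v y) => [vy|yv|vy].
  + by rewrite Dsym_le /= ?subn0 -?subnDA; [ring | lia].
  + by rewrite Dsym_le /= ?subn0; [ring | lia].
  + by rewrite /=; ring.
by subst v; rewrite (ltn_eqF xy) (ltn_geF xy) (leq_gtF (ltnW xy)) /=; ring.
Qed.

Lemma Dsym_1 k : (2 <= k)%N -> Dsym 1 k = p * (1 - p) ^+ (k - 2).
Proof. by move=> k2; rewrite Dsym_le ?(ltnW k2) //= k2. Qed.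

Lemma Dsym_rec i j : (2 <= i)%N -> (i < j)%N ->
  Dsym i j =
    (if i == 2%N then 0 else (1 - (1 - p) ^+ (i - 2)) * Dsym (i - 2) (j - 2))
    + ((1 - p) ^+ (i - 1) - (1 - p) ^+ (j - 2)) * Dsym (i - 1) (j - 2)
    + (1 - p) ^+ (j - 1) * Dsym (i - 1) (j - 1).
Proof.
case: i => [|[|k]] // _ ij; rewrite Dsym_le ?(ltnW ij) // DtriSS ij !subSS !subn0.
rewrite [Dsym k _]Dsym_le ?[Dsym k.+1 (j - 2)]Dsym_le ?[Dsym k.+1 _]Dsym_le; try lia.
by case: k ij => [|k] ij; rewrite ?mulr0.
Qed.
End Recursion.

Section Ranks.
Variable N : nat.
Implicit Types (V : {set 'I_N}) (s t w : 'I_N).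

Definition pairs_in V := [set e in pairs N | e \subset V].

Definition rank V t := #|[set z in V | (z <= t)%N]|.

Lemma pairs_in_sub V : pairs_in V \subset pairs N.
Proof. by apply/subsetP => e; rewrite inE => /andP[]. Qed.

Lemma pairs_in_setD1 V w :
  pairs_in V = [set e in pairs_in V | w \in e] :|: pairs_in (V :\ w).
Proof.
apply/setP => e; rewrite !inE; case we: (w \in e); rewrite ?andbT ?andbF /=.
  apply/esym/orb_idr => /andP[-> /subsetP sEV].
  by apply/subsetP => z /sEV; rewrite inE => /andP[].
case: (#|e| == 2) => //=; apply/idP/idP => /subsetP sEV; apply/subsetP => z ze.
  by rewrite !inE sEV // andbT; apply: contraFneq we => <-.
by have := sEV z ze; rewrite inE => /andP[].
Qed.

Lemma pairs_in_setD1_disjoint V w :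
  [disjoint [set e in pairs_in V | w \in e] & pairs_in (V :\ w)].
Proof.
rewrite -setI_eq0; apply/eqP/setP => e; rewrite !inE.
apply/negP => /andP[/andP[_ we] /andP[_ /subsetP /(_ w we)]].
by rewrite !inE eqxx.
Qed.

Lemma notin_pairs_in_setD1 V w (A : {set {set 'I_N}}) e :
  A \subset pairs_in (V :\ w) -> e \in A -> w \notin e.
Proof.
move=> sA /(subsetP sA); rewrite inE => /andP[_ /subsetP sEV].
by apply/negP => /sEV; rewrite !inE eqxx.
Qed.

Lemma pairs_in_setT : pairs_in [set: 'I_N] = pairs N.
Proof. by apply/setP => e; rewrite !inE subsetT andbT. Qed.

Lemma rank_setD1 V w t : w \in V -> rank (V :\ w) t = (rank V t - (w <= t))%N.
Proof.
move=> wV; rewrite /rank (cardsD1 w [set z in V | (z <= t)%N]) !inE wV /=.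
have -> : [set z in V :\ w | (z <= t)%N] = [set z in V | (z <= t)%N] :\ w.
  by apply/setP => z; rewrite !inE andbA.
by rewrite addKn.
Qed.

Lemma rank_lt V s t : s \in V -> t \in V -> (s < t)%N -> (rank V s < rank V t)%N.
Proof.
move=> sV tV st; apply: proper_card; rewrite properE; apply/andP; split.
  by apply/subsetP => z; rewrite !inE => /andP[-> zs] /=; lia.
by apply/subsetPn; exists t; rewrite !inE tV ?leqnn // -ltnNge.
Qed.

Lemma rank_setT t : rank [set: 'I_N] t = t.+1.
Proof.
have widen_inj : injective (widen_ord (ltn_ord t)).
  by move=> z1 z2 /(congr1 val) e; apply: val_inj.
rewrite /rank (_ : [set z in _ | _] = [set widen_ord (ltn_ord t) z | z : 'I_t.+1]).
  by rewrite card_imset ?card_ord.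
apply/setP => z; rewrite !inE; apply/idP/imsetP => [zt|[z' _ ->]].
  by exists (Ordinal (zt : (z < t.+1)%N)) => //; apply: val_inj.
by rewrite /= -ltnS.
Qed.

End Ranks.

Section MinNode.
Variables (R : comPzRingType) (p : R) (N : nat).
Implicit Types (G GA GB : {set {set 'I_N}}) (V Z : {set 'I_N}) (t v x y z : 'I_N).

Definition Pmatch V x y := Ex p (pairs_in V) (fun G => (matched G x y)%:R).

Variables (V : {set 'I_N}) (a : 'I_N).
Hypotheses (aV : a \in V) (a_min : forall z, z \in V -> (a <= z)%N).

Definition edges_at := [set e in pairs_in V | a \in e].

Definition below t := [set z in V :\ a | (z < t)%N].
Definition below_eq t := [set z in V :\ a | (z <= t)%N].

Definition no_edge_to GA Z := [forall z in Z, [set a; z] \notin GA].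

Definition Pmatch_given x y GA :=
  Ex p (pairs_in (V :\ a)) (fun GB => (matched (GA :|: GB) x y)%:R).

Lemma Pmatch_split x y : Pmatch V x y = Ex p edges_at (Pmatch_given x y).
Proof. by rewrite /Pmatch (pairs_in_setD1 V a) Ex_setU ?pairs_in_setD1_disjoint. Qed.

Lemma set2_edges_at z : z \in V :\ a -> [set a; z] \in edges_at.
Proof.
rewrite !inE => /andP[za zV]; rewrite eqxx andbT cards2 (eq_sym a) za /=.
by apply/subsetP => u; rewrite !inE => /orP[]/eqP->.
Qed.

Lemma edges_atP e : e \in edges_at -> exists2 z, z \in V :\ a & e = [set a; z].
Proof.
rewrite !inE => /andP[/andP[/eqP e2 sEV] ae]; have [z za ez] := card2_mem e2 ae.
by exists z => //; rewrite !inE za (subsetP sEV) // ez set22.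
Qed.

Lemma Ex_no_edge_to Z : Z \subset V :\ a ->
  Ex p edges_at (fun GA => (no_edge_to GA Z)%:R) = (1 - p) ^+ #|Z|.
Proof.
move=> sZ; pose O := [set [set a; z] | z in Z].
have inj : {in Z &, injective (fun z => [set a; z])}.
  move=> z1 z2 z1Z _ /setP/(_ z1); rewrite set22 !inE => /esym/orP[/eqP z1a|/eqP//].
  by move: (subsetP sZ _ z1Z); rewrite z1a !inE eqxx.
rewrite -(card_in_imset inj) -/O -(Ex_avoid p (S := edges_at)); last first.
  by apply/subsetP => _ /imsetP[z zZ ->]; apply/set2_edges_at/(subsetP sZ).
apply: eq_Ex => GA _; congr (nat_of_bool _)%:R.
apply/idP/idP => [/forallP noE|/eqP/setP GO]; last apply/forallP => z.
  apply/eqP/setP => e; rewrite !inE; apply/negP => /andP[eGA /imsetP[z zZ ez]].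
  by have := noE z; rewrite zZ -ez eGA.
apply/implyP => zZ; apply/negP => zGA.
by have := GO [set a; z]; rewrite !inE zGA /= => /negbT/negP; apply; apply/imsetP; exists z.
Qed.

Lemma below_sub t : below t \subset V :\ a.
Proof. by apply/subsetP => z; rewrite inE => /andP[]. Qed.

Lemma below_eq_sub t : below_eq t \subset V :\ a.
Proof. by apply/subsetP => z; rewrite inE => /andP[]. Qed.

Lemma no_edge_to0 Z : no_edge_to set0 Z.
Proof. by apply/forallP => z; rewrite inE implybT. Qed.

Lemma rank_min : rank V a = 1%N.
Proof.
rewrite /rank (_ : [set z in V | (z <= a)%N] = [set a]) ?cards1 //.
apply/setP => z; rewrite !inE; apply/andP/eqP => [[zV za]|->]; last by rewrite aV leqnn.
by apply/val_inj/eqP; rewrite eqn_leq za a_min.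
Qed.

Lemma card_below_eq t : t \in V -> #|below_eq t| = (rank V t - 1)%N.
Proof. by move=> tV; rewrite -[LHS]/(rank (V :\ a) t) rank_setD1 // a_min. Qed.

Lemma card_below t : t \in V :\ a -> #|below t| = (rank V t - 2)%N.
Proof.
move=> tVa; have tV : t \in V by move: tVa; rewrite inE => /andP[].
have -> : below t = below_eq t :\ t.
  by apply/setP => z; rewrite !inE ltn_neqAle andbCA.
have := cardsD1 t (below_eq t); rewrite card_below_eq // inE tVa leqnn add1n => cardD.
by rewrite -[2%N]/(1 + 1)%N subnDA cardD subn1.
Qed.

Lemma edges_at_cases GA : GA \subset edges_at -> GA = set0 \/
  exists v, [set a; v] \in GA /\ forall z, [set a; z] \in GA -> (v <= z)%N.
Proof.
move=> sGA; have [->|[e eGA]] := set_0Vmem GA; [by left | right].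
have [z _ ez] := edges_atP (subsetP sGA _ eGA); rewrite ez in eGA.
by have [v] := @arg_minnP _ z (fun z => [set a; z] \in GA) val eGA; exists v.
Qed.

Section Union.
Variables (GA GB : {set {set 'I_N}}).
Hypotheses (sGA : GA \subset edges_at) (sGB : GB \subset pairs_in (V :\ a)).

Lemma union_sub_pairs : GA :|: GB \subset pairs N.
Proof.
apply/subsetP => e; rewrite inE => /orP[/(subsetP sGA)|/(subsetP sGB)].
  by rewrite !inE => /andP[/andP[]].
by rewrite !inE => /andP[].
Qed.

Lemma union_min e z : e \in GA :|: GB -> z \in e -> (a <= z)%N.
Proof.
move=> eG ze; apply: a_min; move: eG; rewrite inE.
case/orP => [/(subsetP sGA)|/(subsetP sGB)]; rewrite !inE => /andP[].
  by case/andP=> _ /subsetP/(_ z ze).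
by move=> _ /subsetP/(_ z ze); rewrite inE => /andP[].
Qed.

Let min_notin_off e : e \in GB -> a \notin e := notin_pairs_in_setD1 sGB.

Lemma set2_in_union z : ([set a; z] \in GA :|: GB) = ([set a; z] \in GA).
Proof.
by rewrite inE orb_idr // => /min_notin_off; rewrite set21.
Qed.

Lemma peel_union v : peel (GA :|: GB) a v = [set e in GB | v \notin e].
Proof.
apply/setP => e; rewrite !inE; case eGB: (e \in GB); first by rewrite orbT min_notin_off.
rewrite orbF; case eGA: (e \in GA) => //=.
by have := subsetP sGA _ eGA; rewrite inE => /andP[_ ->].
Qed.

End Union.

Section FirstNeighbour.
Variables (GA : {set {set 'I_N}}) (v : 'I_N).
Hypotheses (sGA : GA \subset edges_at) (avGA : [set a; v] \in GA)
  (v_min : forall z, [set a; z] \in GA -> (v <= z)%N).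

Lemma first_nb_mem : v \in V :\ a.
Proof.
have [z zVa /setP/(_ v)] := edges_atP (subsetP sGA _ avGA).
rewrite set22 in_set2 => /esym/orP[/eqP va|/eqP->//].
by have := subsetP sGA _ avGA; rewrite !inE va setUid cards1.
Qed.

Lemma no_edge_to_below t : no_edge_to GA (below t) = (t <= v)%N.
Proof.
apply/forallP/idP => [noE|tv z].
  by rewrite leqNgt; apply: contraL (noE v); rewrite inE first_nb_mem avGA => ->.
by apply/implyP; rewrite inE => /andP[_ zt]; apply: contraTN zt => /v_min; lia.
Qed.

Lemma no_edge_to_below_eq t : no_edge_to GA (below_eq t) = (t < v)%N.
Proof.
apply/forallP/idP => [noE|tv z].
  by rewrite ltnNge; apply: contraL (noE v); rewrite inE first_nb_mem avGA => ->.
by apply/implyP; rewrite inE => /andP[_ zt]; apply: contraTN zt => /v_min; lia.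
Qed.

Section UnionOff.
Variables (GB : {set {set 'I_N}}) (sGB : GB \subset pairs_in (V :\ a)).

Let sGP := union_sub_pairs sGA sGB.
Let a_min_union := union_min sGA sGB.
Let avG : [set a; v] \in GA :|: GB. Proof. by rewrite set2_in_union. Qed.
Let v_min_union z : [set a; z] \in GA :|: GB -> (v <= z)%N.
Proof. by rewrite set2_in_union //; apply: v_min. Qed.

Lemma matched_union_partner y : y != a -> matched (GA :|: GB) v y = false.
Proof. exact: matched_partner sGP a_min_union avG v_min_union y. Qed.

Lemma matched_union_min y : matched (GA :|: GB) a y = (y == v).
Proof.
apply: matched_min sGP a_min_union avG v_min_union y _.
exact/stable_exists/(subset_trans (peel_sub _ _ _) sGP).
Qed.

Lemma matched_union_peel x y : x \notin [set a; v] -> y \notin [set a; v] ->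
  matched (GA :|: GB) x y = matched [set e in GB | v \notin e] x y.
Proof.
by move=> xav yav; rewrite (matched_peel sGP a_min_union avG v_min_union) ?peel_union.
Qed.

End UnionOff.

Lemma Pmatch_given_peel x y : x \in V :\ a :\ v -> y \in V :\ a :\ v ->
  Pmatch_given x y GA = Pmatch (V :\ a :\ v) x y.
Proof.
have notav t : t \in V :\ a :\ v -> t \notin [set a; v].
  by rewrite !inE negb_or => /and3P[-> -> _].
move=> /notav xav /notav yav; rewrite /Pmatch_given.
under eq_Ex => GB sGB do rewrite matched_union_peel //.
rewrite (pairs_in_setD1 (V :\ a) v) setUC Ex_indep; last first.
- move=> A1 A2 sA1 sA2; congr ((nat_of_bool _)%:R); congr matched.
  apply/setP => e; rewrite !inE; case: (boolP (e \in A1)) => [eA1|_] /=.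
    by rewrite (notin_pairs_in_setD1 sA1 eA1).
  by case: (boolP (e \in A2)) => // /(subsetP sA2); rewrite inE => /andP[_ ->].
- by rewrite disjoint_sym pairs_in_setD1_disjoint.
apply: eq_Ex => A sA; congr ((nat_of_bool _)%:R); congr matched.
by apply/setP => e; rewrite inE andb_idr // => /(notin_pairs_in_setD1 sA).
Qed.

End FirstNeighbour.

Lemma Pmatch_min_node y : y \in V -> (a < y)%N -> Pmatch V a y = Dtri p 1 (rank V y).
Proof.
move=> yV ay; have yVa : y \in V :\ a by rewrite !inE yV -val_eqE gtn_eqF.
rewrite Pmatch_split (eq_Ex p (F' := fun GA =>
  (no_edge_to GA (below y))%:R - (no_edge_to GA (below_eq y))%:R)); last first.
  move=> GA sGA; case: (edges_at_cases sGA) => [->|[v [avGA v_min]]].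
    rewrite !no_edge_to0 subrr -[RHS](Ex_cst p (pairs_in (V :\ a))) /Pmatch_given.
    apply: eq_Ex => GB sGB; rewrite set0U matched_isolated //.
    by move=> e; apply: notin_pairs_in_setD1 sGB.
  rewrite (no_edge_to_below sGA avGA v_min) (no_edge_to_below_eq sGA avGA v_min).
  rewrite /Pmatch_given.
  under eq_Ex => GB sGB do rewrite (matched_union_min sGA avGA v_min sGB).
  by rewrite Ex_cst -val_eqE; case: ltngtP; rewrite ?subrr ?subr0.
have := rank_lt aV yV ay; rewrite rank_min => j1.
rewrite ExB !Ex_no_edge_to ?below_sub ?below_eq_sub // card_below // card_below_eq //= j1.
by rewrite (_ : rank V y - 1 = (rank V y - 2).+1)%N ?exprS; [ring | lia].
Qed.

Section Step.
Variables (x y : 'I_N).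
Hypotheses (xV : x \in V) (yV : y \in V) (xa : x != a) (xy : (x < y)%N).
Hypothesis IH : forall W : {set 'I_N}, (#|W| < #|V|)%N ->
  {in W &, forall s t, Pmatch W s t = Dsym p (rank W s) (rank W t)}.

Let i := rank V x.
Let j := rank V y.

Let xVa : x \in V :\ a. Proof. by rewrite !inE xa. Qed.
Let ya : y != a.
Proof. by rewrite -val_eqE gtn_eqF // (leq_ltn_trans (a_min xV)). Qed.
Let yVa : y \in V :\ a. Proof. by rewrite !inE ya. Qed.
Let ij : (1 < i < j)%N.
Proof.
rewrite (rank_lt xV yV xy) andbT -rank_min rank_lt //.
by rewrite ltn_neqAle val_eqE eq_sym xa a_min.
Qed.
Let card_setD1 : (#|V :\ a| < #|V|)%N.
Proof. by rewrite (cardsD1 a V) aV. Qed.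

Lemma Pmatch_given_eq GA : GA \subset edges_at ->
  Pmatch_given x y GA =
    Dtri p (i - 2) (j - 2) * (1 - (no_edge_to GA (below x))%:R)
  + Dtri p (i - 1) (j - 2) * ((no_edge_to GA (below_eq x))%:R - (no_edge_to GA (below y))%:R)
  + Dtri p (i - 1) (j - 1) * (no_edge_to GA (below_eq y))%:R.
Proof.
move=> sGA; case: (edges_at_cases sGA) => [->|[v [avGA v_min]]].
  rewrite !no_edge_to0 /Pmatch_given; under eq_Ex do rewrite set0U.
  rewrite -/(Pmatch _ x y) IH // !rank_setD1 // !a_min // Dsym_le; last by case/andP: ij; lia.
  by rewrite /=; ring.
have vVa := first_nb_mem sGA avGA.
rewrite !(no_edge_to_below sGA avGA v_min) !(no_edge_to_below_eq sGA avGA v_min).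
rewrite -Dsym_partner //.
case: (boolP ((v != x :> nat) && (v != y :> nat))) => [/andP[vx vy]|] /=.
  have vW t : t \in V :\ a -> v != t :> nat -> t \in V :\ a :\ v.
    by move=> tVa vt; rewrite in_setD1 tVa andbT eq_sym -val_eqE.
  rewrite (Pmatch_given_peel sGA avGA v_min) ?vW // IH ?vW //; last first.
    by apply: leq_ltn_trans card_setD1; apply/subset_leq_card/subsetDl.
  by rewrite !rank_setD1 // ?a_min // mul1r.
rewrite negb_and !negbK mul0r -[RHS](Ex_cst p (pairs_in (V :\ a))).
case/orP=> /eqP/val_inj vt.
  by apply: eq_Ex => GB sGB; rewrite -vt (matched_union_partner sGA avGA v_min sGB ya).
by apply: eq_Ex => GB sGB; rewrite matchedC -vt (matched_union_partner sGA avGA v_min sGB xa).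
Qed.

Lemma Pmatch_step : Pmatch V x y = Dtri p i j.
Proof.
rewrite Pmatch_split (eq_Ex p Pmatch_given_eq) !ExD !ExZ !ExB Ex_cst.
rewrite !Ex_no_edge_to ?below_sub ?below_eq_sub // !card_below // !card_below_eq //.
case/andP: ij; rewrite -/i -/j; case: i => [|[|k]] // _ kj.
by rewrite DtriSS kj !subSS !subn0; ring.
Qed.

End Step.

End MinNode.

Section RankInvariance.
Variables (R : comPzRingType) (p : R) (N : nat).

Lemma PmatchC (V : {set 'I_N}) (x y : 'I_N) : Pmatch p V x y = Pmatch p V y x.
Proof. by apply: eq_Ex => G _; rewrite matchedC. Qed.

Lemma Pmatch_rank (V : {set 'I_N}) :
  {in V &, forall x y, Pmatch p V x y = Dsym p (rank V x) (rank V y)}.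
Proof.
elim: {V}#|V|.+1 {-2}V (ltnSn #|V|) => // n IH V cardV.
have Pmatch_lt (x y : 'I_N) : x \in V -> y \in V -> (x < y)%N ->
    Pmatch p V x y = Dsym p (rank V x) (rank V y).
  move=> xV yV xy; rewrite Dsym_le; last exact/ltnW/rank_lt.
  have [a aV a_min] := arg_minnP val xV.
  have [xa|xa] := eqVneq x a; first by rewrite xa rank_min // Pmatch_min_node // -xa.
  apply: (Pmatch_step aV a_min xV yV xa xy) => W cardW.
  by apply: IH; apply: leq_trans cardW _.
move=> x y xV yV; case: (ltngtP x y) => [xy|yx|/val_inj xy]; first exact: Pmatch_lt.
  by rewrite PmatchC DsymC Pmatch_lt.
rewrite -xy Dsym_diag -[RHS](Ex_cst p (pairs_in V)); apply: eq_Ex => G sG.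
by rewrite matched_diag // (subset_trans sG (pairs_in_sub V)).
Qed.

End RankInvariance.

Lemma DN_Pmatch (R : numDomainType) (p : R) N (u w : 'I_N) :
  DN N p u.+1 w.+1 = Pmatch p [set: 'I_N] u w.
Proof.
rewrite /DN /Pmatch /Ex pairs_in_setT big_mkcondr; apply: eq_bigr => G _.
have -> : matched_ij G u.+1 w.+1 = matched G u w.
  apply/existsP/idP => [[u' /existsP[w' /and3P[/eqP [/val_inj<-] /eqP [/val_inj<-] //]]]|uw].
  by exists u; apply/existsP; exists w; rewrite !eqxx.
by case: (matched G u w); rewrite ?mulr1 ?mulr0.
Qed.

Theorem mainTheorem4 (R : realFieldType) (p : R) (hp0 : 0 < p) (hp1 : p <= 1) :
  exists D : nat -> nat -> R,
    [/\ (forall (N i j : nat), (2 <= N)%N -> (1 <= i)%N -> (1 <= j)%N ->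
           (maxn i j <= N)%N -> DN N p i j = D i j),
        (forall i : nat, (1 <= i)%N -> D i i = 0),
        (forall i j : nat, (1 <= i)%N -> (1 <= j)%N -> D i j = D j i),
        (forall k : nat, (2 <= k)%N -> D 1%N k = p * (1 - p) ^+ (k - 2)) &
        (forall i j : nat, (2 <= i)%N -> (i < j)%N ->
           D i j =
             (if i == 2%N then 0
              else (1 - (1 - p) ^+ (i - 2)) * D (i - 2)%N (j - 2)%N)
             + ((1 - p) ^+ (i - 1) - (1 - p) ^+ (j - 2)) * D (i - 1)%N (j - 2)%N
             + (1 - p) ^+ (j - 1) * D (i - 1)%N (j - 1)%N)].
Proof.
exists (Dsym p); split.
- move=> N i j _ i1 j1; rewrite geq_max -(prednK i1) -(prednK j1) => /andP[iN jN].
  by rewrite (DN_Pmatch p (Ordinal iN) (Ordinal jN)) Pmatch_rank ?inE // !rank_setT.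
- by move=> i _; apply: Dsym_diag.
- by move=> i j _ _; apply: DsymC.
- exact: Dsym_1.
- exact: Dsym_rec.
Qed.
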